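(* Let $a,q$ be complex numbers, let $F(z)=\sum_{n=0}^{\infty}a_nz^n\in\mathbb{C}[[z]]$ and for $k\ge0$ let $F_k(z)=\sum_{i=0}^ka_iz^i$ be its $k$-th truncation. Suppose that $$\frac{F(z)}{1-az}=\sum_{n=0}^{\infty}\frac{c_nz^{n}}{1-azq^n}$$ in $\mathbb{C}[[z]]$ with coefficients $c_n$ independent of $z$. Then $c_0=a_0$ and for $n\ge1$, $$c_n=\sum_{k=0}^{n-1}g_{n-k}(q)\,q^{(n-k)k}\,[z^{n}]\Big\{\frac{F(z)-F_k(z)}{1-az}\Big\},$$ where the polynomials $g_n(q)$ ($n\ge1$) are defined recursively by $$g_n(q)=1-\sum_{i=1}^{n-1}g_{n-i}(q)\,q^{(n-i)i}.$$
   Context: $[z^m]\{f\}$ denotes the coefficient of $z^m$ in the formal power series $f$; $1/(1-az)$ and $1/(1-azq^n)$ are expanded as geometric series in $z$. Empty sums are $0$ (so $g_1(q)=1$). *)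

(* Formal power series over the complex numbers C = R[i]
   (R : realType, the real numbers) are represented by their coefficient
   sequences nat -> C. *)
From HB Require Import structures.
From mathcomp Require Import all_boot all_order all_algebra.
From mathcomp Require Import complex.
From mathcomp Require Import reals.
Set Implicit Arguments. Unset Strict Implicit. Unset Printing Implicit Defensive.
Import Order.TTheory GRing.Theory Num.Theory.
Local Open Scope ring_scope.

Section FPS.
Variable C : comRingType.

Definition fps := nat -> C.

Definition coefz (m : nat) (f : fps) : C := f m.

Definition fsub (f g : fps) : fps := fun m => f m - g m.

Definition fmul (f g : fps) : fps := fun m => \sum_(i < m.+1) f i * g (m - i)%N.

(* 1/(1 - b z) expanded as a geometric series *)
Definition geom (b : C) : fps := fun m => b ^+ m.

Definition fscale (c : C) (f : fps) : fps := fun m => c * f m.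

Definition zshift (n : nat) (f : fps) : fps :=
  fun m => if (n <= m)%N then f (m - n)%N else 0.

(* sum_{n>=0} s n, for a family where s n is divisible by z^n
   (so each coefficient is a finite sum: [z^m] only n <= m contribute) *)
Definition fsum_ord (s : nat -> fps) : fps := fun m => \sum_(n < m.+1) s n m.

Definition trunc (k : nat) (f : fps) : fps := fun m => if (m <= k)%N then f m else 0.

(* the polynomials g_n(q): g_n = 1 - sum_{i=1}^{n-1} g_{n-i} q^{(n-i) i}
   for n >= 1 (g_1 = 1); g_0 := 0 (unused). Defined with fuel. *)
Fixpoint gaux (fuel n : nat) : {poly C} :=
  match fuel with
  | 0 => 0
  | fuel'.+1 =>
      if n == 0%N then 0
      else 1 - \sum_(1 <= i < n) gaux fuel' (n - i)%N * 'X ^+ ((n - i) * i)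
  end.

Definition gpoly (n : nat) : {poly C} := gaux n n.

End FPS.

From mathcomp Require Import all_boot all_algebra.
From mathcomp Require Import complex reals.
From mathcomp Require Import zify ring.
Set Implicit Arguments.
Unset Strict Implicit.
Unset Printing Implicit Defensive.

Import GRing.Theory.
Local Open Scope ring_scope.

(* Comparing coefficients of z^m, the hypothesis says that
   S_m := [z^m] F/(1-az) equals sum_{j<=m} c_j a^(m-j) q^(j(m-j)), while
   [z^n] (F - F_k)/(1-az) = S_n - a^(n-k) S_k.  The recursion defining g_n says
   exactly that the weights w(N,t) := g_{N-t}(q) q^((N-t)t), t < N, sum to 1,
   and they satisfy w(j+N, j+t) q^(jt) = w(N,t) q^(jN).  Hence the w(n,.)-weighted
   sum of the a^(n-k) S_k, k < n, reproduces the terms j < n of S_n exactly, and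
   the weighted sum of the S_n - a^(n-k) S_k leaves only c_n. *)

Section GPoly.
Variable C : comNzRingType.

Lemma gaux_fuel f1 f2 n : (n <= f1)%N -> (n <= f2)%N -> gaux C f1 n = gaux C f2 n.
Proof.
elim: f1 f2 n => [|f1 IH] [|f2] n //= le_n1 le_n2; try by have -> : n = 0%N by lia.
case: eqP => // _; congr (1 - _); apply: eq_big_nat => i /andP[i_gt0 lt_in].
by rewrite (IH f2) //; lia.
Qed.

Lemma gpoly_rec n : (0 < n)%N ->
  gpoly C n = 1 - \sum_(1 <= i < n) gpoly C (n - i) * 'X ^+ ((n - i) * i).
Proof.
case: n => // n _; rewrite /gpoly /=; congr (1 - _).
by apply: eq_big_nat => i /andP[i_gt0 lt_in]; rewrite (@gaux_fuel n (n.+1 - i)) //; lia.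
Qed.

Variable q : C.

Definition gweight n k : C := (gpoly C (n - k)).[q] * q ^+ ((n - k) * k).

Lemma sum_gweight n : (0 < n)%N -> \sum_(0 <= k < n) gweight n k = 1.
Proof.
move=> n_gt0; rewrite big_ltn // /gweight subn0 muln0 expr0 mulr1 gpoly_rec //.
rewrite hornerD hornerN hornerC horner_sum.
by rewrite (eq_bigr (gweight n)) ?subrK // => k _; rewrite hornerM hornerXn.
Qed.

Lemma gweight_shift j N t : (t <= N)%N ->
  gweight (j + N) (j + t) * q ^+ (j * t) = gweight N t * q ^+ (j * N).
Proof.
move=> le_tN; rewrite /gweight subnDl -!mulrA -!exprD; congr (_ * q ^+ _).
by rewrite [(j * t)%N]mulnC mulnDr addnAC -mulnDl subnK // addnC (mulnC N).
Qed.

Lemma sum_gweight_shift j n : (j < n)%N ->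
  \sum_(j <= k < n) gweight n k * q ^+ (j * (k - j)) = q ^+ (j * (n - j)).
Proof.
move=> lt_jn; have [N -> N_gt0] : exists2 N, n = (j + N)%N & (0 < N)%N.
  by exists (n - j)%N; rewrite ?subn_gt0 // subnKC // ltnW.
rewrite -{1}(add0n j) big_addn addKn -[RHS]mul1r -(@sum_gweight N N_gt0) mulr_suml.
by apply: eq_big_nat => t /andP[_ lt_tN]; rewrite addnK (addnC t) gweight_shift // ltnW.
Qed.

End GPoly.

Lemma sum_nat_triangle (V : nmodType) n (f : nat -> nat -> V) :
  \sum_(0 <= k < n) \sum_(0 <= j < k.+1) f k j =
  \sum_(0 <= j < n) \sum_(j <= k < n) f k j.
Proof.
transitivity (\sum_(0 <= k < n) \sum_(0 <= j < n) if (j <= k)%N then f k j else 0).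
  apply: eq_big_nat => k /andP[_ lt_kn].
  by rewrite (big_nat_widen _ _ _ _ _ lt_kn) big_mkcond; apply: eq_big_nat => j _; rewrite ltnS.
rewrite exchange_big_nat; apply: eq_big_nat => j _.
by rewrite (big_nat_widenl _ _ _ _ _ (leq0n j)) big_mkcond.
Qed.

Section Inversion.
Variables (C : comNzRingType) (a q : C) (c : nat -> C).

Definition qsum_coef m := \sum_(j < m.+1) c j * a ^+ (m - j) * q ^+ (j * (m - j)).

Lemma qsum_coef_recr n :
  qsum_coef n = \sum_(0 <= j < n) c j * a ^+ (n - j) * q ^+ (j * (n - j)) + c n.
Proof. by rewrite /qsum_coef big_ord_recr /= subnn expr0 muln0 expr0 !mulr1 big_mkord. Qed.

Lemma sum_gweight_qsum_coef n :
  \sum_(0 <= k < n) gweight q n k * (a ^+ (n - k) * qsum_coef k) =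
  \sum_(0 <= j < n) c j * a ^+ (n - j) * q ^+ (j * (n - j)).
Proof.
transitivity (\sum_(0 <= k < n) \sum_(0 <= j < k.+1)
                c j * a ^+ (n - j) * (gweight q n k * q ^+ (j * (k - j)))).
  apply: eq_big_nat => k /andP[_ lt_kn]; rewrite /qsum_coef big_mkord !mulr_sumr.
  apply: eq_bigr => j _; have le_jk : (j <= k)%N by rewrite -ltnS.
  have -> : a ^+ (n - j) = a ^+ (n - k) * a ^+ (k - j) by rewrite -exprD; congr (a ^+ _); lia.
  ring.
rewrite sum_nat_triangle; apply: eq_big_nat => j /andP[_ lt_jn].
by rewrite -mulr_sumr sum_gweight_shift.
Qed.

Lemma gweight_inversion n : (0 < n)%N ->
  \sum_(0 <= k < n) gweight q n k * (qsum_coef n - a ^+ (n - k) * qsum_coef k) = c n.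
Proof.
move=> n_gt0; under eq_bigr do rewrite mulrBr.
rewrite sumrB -mulr_suml sum_gweight // mul1r sum_gweight_qsum_coef.
by rewrite qsum_coef_recr [_ + c n]addrC addrK.
Qed.

End Inversion.

Section Series.
Variable C : comNzRingType.
Implicit Types (f g h : fps C) (b : C).

Lemma fmul_fsubl f g h m : fmul (fsub f g) h m = fmul f h m - fmul g h m.
Proof. by rewrite /fmul /fsub -sumrB; apply: eq_bigr => i _; rewrite mulrBl. Qed.

Lemma fmul_trunc_geom k n f b : (k <= n)%N ->
  fmul (trunc k f) (geom b) n = b ^+ (n - k) * fmul f (geom b) k.
Proof.
move=> le_kn; rewrite /fmul /trunc /geom mulr_sumr.
rewrite (big_ord_widen n.+1 (fun i => b ^+ (n - k) * (f i * b ^+ (k - i)))) ?ltnS //.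
rewrite [RHS]big_mkcond; apply: eq_bigr => i _; rewrite ltnS; case: ifP => [le_ik|_].
  by rewrite mulrCA -exprD; congr (_ * b ^+ _); lia.
by rewrite mul0r.
Qed.

Lemma fsum_zshift_geom (a q : C) (c : nat -> C) m :
  fsum_ord (fun n => zshift n (fscale (c n) (geom (a * q ^+ n)))) m = qsum_coef a q c m.
Proof.
rewrite /fsum_ord /zshift /fscale /geom /qsum_coef; apply: eq_bigr => j _.
by rewrite -ltnS ltn_ord exprMn -exprM mulrA.
Qed.

End Series.

Local Open Scope complex_scope.

Theorem corollary2p4 (R : realType) (a q : R[i]) (F c : nat -> R[i]) :
  (* F(z)/(1-az) = sum_{n>=0} c_n z^n / (1 - a z q^n) in C[[z]] *)
  fmul F (geom a) =
    fsum_ord (fun n => zshift n (fscale (c n) (geom (a * q ^+ n)))) ->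
  c 0%N = F 0%N /\
  (forall n : nat, (0 < n)%N ->
     c n = \sum_(k < n)
             (gpoly _ (n - k)%N).[q] * q ^+ ((n - k) * k)%N *
             coefz n (fmul (fsub F (trunc k F)) (geom a))).
Proof.
move=> expansion.
have coefE m : fmul F (geom a) m = qsum_coef a q c m by rewrite expansion fsum_zshift_geom.
split.
  by have := coefE 0%N; rewrite /fmul /qsum_coef !big_ord1 /geom !subnn !expr0 !mulr1.
move=> n n_gt0; rewrite -(gweight_inversion a q c n_gt0) big_mkord; apply: eq_bigr => k _.
by rewrite /coefz fmul_fsubl fmul_trunc_geom 1?ltnW // !coefE.
Qed.
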